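(* Let $X\subseteq\mathbb{R}^m$, $f:X\to\mathbb{R}^d$ with $a_{i0}\le f_i(x)\le a_{in}$ on $X$, and $\phi:\mathbb{R}^d\to\mathbb{R}$ multilinear, $\phi(s_{1n},\dots,s_{dn})=\sum_{I\in\mathcal{I}}c_I\prod_{i\in I}s_{in}$ with $\mathcal{I}$ a collection of subsets of $[d]$ and $c_I\in\mathbb{R}$. Let $u:X\to\mathbb{R}^{d\times(n+1)}$ be convex with $u_{i0}(x)=a_{i0}$, $u_{in}(x)=f_i(x)$, $u_{ij}(x)\le\min\{f_i(x),a_{ij}\}$ ($j\in[n-1]$), and $W$ a convex set containing $\{(x,f(x))\mid x\in X\}$. Then, identifying $f$ with $s_{\cdot n}=(s_{1n},\dots,s_{dn})$, the set $\{(\mu,w,s,\delta)\mid(\mu,w,s)\text{ satisfies (HQ)},\ (Z(s),\delta)\text{ satisfies (Inc-1)}\}$ is an ideal formulation of $\bigcup_{H\in\mathcal{H}}\operatorname{conv}\bigl(\{(f,\phi(f))\mid f\in H\}\bigr)$, and adding $u(x)\le s$ and $(x,s_{\cdot n})\in W$ yields an MICP relaxation of the graph of $\phi\circ f$.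
   Context: $d,n\ge1$, $[k]=\{1,\dots,k\}$, $E=\{0,\dots,n\}^d$; $a\in\mathbb{R}^{d\times(n+1)}$ with $a_{i0}<\dots<a_{in}$; integers $0=\tau(i,0)<\dots<\tau(i,l_i)=n$; $\mathcal{H}=\{\prod_i[a_{i\tau(i,t_i-1)},a_{i\tau(i,t_i)}]\mid t_i\in[l_i]\}$. $\Delta_i=\{z_i\in\mathbb{R}^{n+1}\mid1=z_{i0}\ge\dots\ge z_{in}\ge0\}$. (Inc-1): $z_i\in\Delta_i$, $\delta_{it}\in\{0,1\}$, $z_{i\tau(i,t)}\ge\delta_{it}\ge z_{i\tau(i,t)+1}$. $Z(s)_{i0}=1$, $Z(s)_{ij}=(s_{ij}-s_{i,j-1})/(a_{ij}-a_{i,j-1})$. $v_{ij}\in\mathbb{R}^{n+1}$ has $k$-th component $a_{i,\min\{k,j\}}$. System (HQ) in $(\mu,w,s)$, $w=(w_p)_{p\in E}$: $\mu=\sum_{I\in\mathcal{I}}c_I\sum_{p\in E}(\prod_{i\in I}a_{ip_i})w_p$, $w\ge0$, $\sum_{p\in E}w_p=1$, $s_i=\sum_{j=0}^nv_{ij}\sum_{p\in E:p_i=j}w_p$ for $i\in[d]$. Ideal formulation: projection onto $(f,\mu)$ equals the target set and every extreme point of the continuous relaxation has binary $\delta$. MICP relaxation of the graph: its projection onto $(x,\mu)$ contains $\{(x,\phi(f(x)))\mid x\in X\}$ and its continuous relaxation is convex. *)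

From HB Require Import structures.
From mathcomp Require Import all_boot all_order all_algebra.
From mathcomp Require Import reals.
Set Implicit Arguments. Unset Strict Implicit. Unset Printing Implicit Defensive.
Import Order.TTheory GRing.Theory Num.Theory.
Local Open Scope ring_scope.

Section Defs.
Variable R : realType.

Definition convex_wrt (T : Type) (cmb : R -> T -> T -> T) (S : T -> Prop) :=
  forall x y t, S x -> S y -> 0 <= t <= 1 -> S (cmb t x y).

Definition hull_wrt (T : Type) (cmb : R -> T -> T -> T) (A : T -> Prop) (y : T) :=
  forall C : T -> Prop, convex_wrt cmb C -> (forall z, A z -> C z) -> C y.

Definition extreme_wrt (T : Type) (cmb : R -> T -> T -> T) (S : T -> Prop) (p : T) :=
  S p /\ forall q r t, S q -> S r -> 0 < t < 1 -> p = cmb t q r -> q = r.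

Definition vcomb (k : nat) (t : R) (x y : 'I_k -> R) : 'I_k -> R :=
  fun i => t * x i + (1 - t) * y i.

(* combination on R^d x R (the (f, mu) space) *)
Definition fmcomb (d : nat) (t : R) (p q : ('I_d -> R) * R) : ('I_d -> R) * R :=
  (vcomb t p.1 q.1, t * p.2 + (1 - t) * q.2).

(* E = {0,..,n}^d is {ffun 'I_d -> 'I_n.+1};  s_i in R^{n+1};
   delta_{it} for t in [l_i - 1], stored at index t-1 : 'I_(l i).-1          *)
Record point (d n : nat) (l : 'I_d -> nat) := Point {
  pmu : R;
  pw : {ffun 'I_d -> 'I_n.+1} -> R;
  ps : 'I_d -> 'I_n.+1 -> R;
  pdelta : forall i : 'I_d, 'I_(l i).-1 -> R }.
Arguments point : clear implicits.
Arguments Point {d n l}.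
Arguments pdelta {d n l} p i t.

Definition pcomb d n l (t : R) (p q : point d n l) : point d n l :=
  Point (t * pmu p + (1 - t) * pmu q)
        (fun e => t * pw p e + (1 - t) * pw q e)
        (fun i j => t * ps p i j + (1 - t) * ps q i j)
        (fun (i : 'I_d) (k : 'I_(l i).-1) => t * pdelta p i k + (1 - t) * pdelta q i k).

(* s_{ij} with a natural-number index j (meaningful for j <= n) *)
Definition sat d n l (p : point d n l) (i : 'I_d) (j : nat) : R :=
  ps p i (inord j).

Definition slast d n l (p : point d n l) : 'I_d -> R := fun i => ps p i ord_max.

Definition Zs d n l (a : 'I_d -> nat -> R) (p : point d n l) (i : 'I_d) (j : nat) : R :=
  if j == 0%N then 1 else (sat p i j - sat p i j.-1) / (a i j - a i j.-1).

Definition phi d (II : {set {set 'I_d}}) (c : {set 'I_d} -> R) (s : 'I_d -> R) : R :=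
  \sum_(I in II) c I * \prod_(i in I) s i.

Definition HQ d n l (a : 'I_d -> nat -> R) (II : {set {set 'I_d}}) (c : {set 'I_d} -> R)
  (p : point d n l) : Prop :=
  [/\ pmu p = \sum_(I in II) c I *
                 \sum_(q : {ffun 'I_d -> 'I_n.+1}) (\prod_(i in I) a i (q i)) * pw p q,
      (forall q, 0 <= pw p q),
      \sum_(q : {ffun 'I_d -> 'I_n.+1}) pw p q = 1 &
      (* s_i = sum_j v_ij sum_{p : p_i = j} w_p, (v_ij)_k = a_{i, min(k,j)} *)
      forall (i : 'I_d) (k : 'I_n.+1),
        ps p i k = \sum_(j < n.+1) a i (minn k j) *
                     \sum_(q : {ffun 'I_d -> 'I_n.+1} | q i == j) pw p q ].

(* (Z(s), delta) satisfies (Inc-1); if bin = false, delta is relaxed to [0,1]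
   (continuous relaxation). *)
Definition Inc1 d n l (a : 'I_d -> nat -> R) (tau : 'I_d -> nat -> nat) (bin : bool)
  (p : point d n l) : Prop :=
  [/\ (* z_i in Delta_i (z_{i0} = 1 holds by definition of Z) *)
      (forall (i : 'I_d) (j : nat), (1 <= j <= n)%N -> Zs a p i j <= Zs a p i j.-1),
      (forall i : 'I_d, 0 <= Zs a p i n),
      (forall (i : 'I_d) (t : 'I_(l i).-1),
          Zs a p i (tau i t.+1) >= pdelta p i t /\
          pdelta p i t >= Zs a p i (tau i t.+1).+1) &
      (forall (i : 'I_d) (t : 'I_(l i).-1),
          if bin then pdelta p i t = 0 \/ pdelta p i t = 1
          else 0 <= pdelta p i t <= 1) ].

Definition formulation d n l a tau II c (bin : bool) (p : point d n l) : Prop :=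
  HQ a II c p /\ Inc1 a tau bin p.

Definition target d (l : 'I_d -> nat) (a : 'I_d -> nat -> R) (tau : 'I_d -> nat -> nat)
  II c (y : ('I_d -> R) * R) : Prop :=
  exists tt : 'I_d -> nat,
    (forall i, (1 <= tt i <= l i)%N) /\
    hull_wrt (@fmcomb d)
      (fun z => z.2 = phi II c z.1 /\
         forall i, a i (tau i (tt i).-1) <= z.1 i <= a i (tau i (tt i))) y.

Definition ideal_formulation d n l (Form : bool -> point d n l -> Prop)
  (Target : ('I_d -> R) * R -> Prop) : Prop :=
  (forall y, Target y <-> exists p, Form true p /\ (slast p, pmu p) = y) /\
  (forall p, extreme_wrt (@pcomb d n l) (Form false) p ->
     forall i t, pdelta p i t = 0 \/ pdelta p i t = 1).

Definition xpcomb m d n l (t : R) (p q : ('I_m -> R) * point d n l) :=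
  (vcomb t p.1 q.1, pcomb t p.2 q.2).

Definition MICP_relaxation m d n l (M : bool -> ('I_m -> R) * point d n l -> Prop)
  (X : ('I_m -> R) -> Prop) (g : ('I_m -> R) -> R) : Prop :=
  (forall x, X x -> exists p, M true (x, p) /\ pmu p = g x) /\
  convex_wrt (@xpcomb m d n l) (M false).

Definition ext_formulation m d n l a tau II c (X : ('I_m -> R) -> Prop)
  (u : ('I_m -> R) -> 'I_d -> 'I_n.+1 -> R) (W : ('I_m -> R) -> ('I_d -> R) -> Prop)
  (bin : bool) (xp : ('I_m -> R) * point d n l) : Prop :=
  [/\ X xp.1, formulation a tau II c bin xp.2,
      (forall i j, u xp.1 i j <= ps xp.2 i j) & W xp.1 (slast xp.2)].

End Defs.

From HB Require Import structures.
From mathcomp Require Import all_boot all_order all_algebra.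
From mathcomp Require Import reals ring lra.
From Stdlib Require Import FunctionalExtensionality.
Import Order.TTheory GRing.Theory Num.Theory.
Set Implicit Arguments. Unset Strict Implicit. Unset Printing Implicit Defensive.
Local Open Scope ring_scope.

(* Points satisfying (HQ) are parametrised by a probability distribution [w] on the vertex
   set E = {0,...,n}^d together with [delta]: s_(i,k) is the [w]-expectation of
   a_(i, min(k, q_i)), [mu] is the [w]-expectation of phi at the grid points, and hence
   Z(s)_(i,k) is the tail mass P_w(q_i >= k).  Constraint (Inc-1) then says that each delta_(i,t) lies between
   P_w(q_i > tau(i,t)) and P_w(q_i >= tau(i,t)).

   A binary delta confines the support of [w] to one box H, so (s_.n, mu) is an average of
   points of the graph of phi over grid points of H.  Conversely a point f of a grid cell
   is realised by the product of the two-point distributions on the neighbouring grid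
   values, multilinearity of phi giving mu = phi(f); fixing delta keeps the feasible set
   convex, so the whole hull is reached.

   At an extreme point of the relaxation [w] is a Dirac mass, since otherwise the point
   splits into the vertex (with an interpolated delta) and a residual point.  At a vertex
   the sandwich forces every delta to 0 or 1, except where it is all of [0, 1] and delta
   can be moved alone.

   For the MICP relaxation, the grid-cell point of f(x) has s_(i,k) = min(a_(i,k), f_i(x)),
   which dominates u(x), and convexity of X, u and W gives convexity of the relaxation. *)

(** * Distributions and convex combinations *)

Section Distribution.
Variables (R : numDomainType) (T : finType).

Definition distribution (w : T -> R) := (forall x, 0 <= w x) /\ \sum_x w x = 1.

Lemma sum_mul_eq_indicator (F : T -> R) x0 : \sum_x F x * (x == x0)%:R = F x0.
Proof.
rewrite (bigD1 x0) //= eqxx mulr1 big1 ?addr0 // => x /negbTE ->.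
by rewrite mulr0.
Qed.

Lemma distribution_indicator x0 : distribution (fun x => (x == x0)%:R).
Proof.
split=> [x|]; first exact: ler0n.
by rewrite -[RHS](sum_mul_eq_indicator (fun=> 1) x0); apply: eq_bigr => x _; rewrite mul1r.
Qed.

Lemma distribution_comb (t : R) w1 w2 : 0 <= t <= 1 -> distribution w1 -> distribution w2 ->
  distribution (fun x => t * w1 x + (1 - t) * w2 x).
Proof.
move=> /andP[t0 t1] [w1_ge0 w1_sum] [w2_ge0 w2_sum]; split=> [x|].
  by rewrite addr_ge0 // mulr_ge0 // subr_ge0.
by rewrite big_split /= -!mulr_sumr w1_sum w2_sum !mulr1 subrKC.
Qed.

Lemma distribution_supported w : distribution w -> exists x, 0 < w x.
Proof.
case=> w_ge0 w_sum; apply/existsP; apply: contraT => /existsPn w_le0.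
move: w_sum; rewrite big1 => [/eqP|x _]; first by rewrite eq_sym oner_eq0.
by apply/eqP; move: (w_le0 x); rewrite lt_def w_ge0 andbT negbK.
Qed.

End Distribution.

Lemma sum_fibers (R : pzSemiRingType) (T J : finType) (h : T -> J) (g : J -> R) (w : T -> R) :
  \sum_j g j * \sum_(x | h x == j) w x = \sum_x g (h x) * w x.
Proof.
rewrite [RHS](partition_big h xpredT) //=; apply: eq_bigr => j _.
by rewrite mulr_sumr; apply: eq_bigr => x /eqP ->.
Qed.

Lemma sum_ord_mul_eq_indicator (R : pzSemiRingType) N k (g : nat -> R) : (k < N)%N ->
  \sum_(m < N) g m * (m == k :> nat)%:R = g k.
Proof.
move=> kN; rewrite (bigD1 (Ordinal kN)) //= eqxx mulr1 big1 ?addr0 // => m mk.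
rewrite (_ : (m == k :> nat) = false) ?mulr0 //.
by apply: contraNF mk => /eqP mk; apply/eqP/val_inj.
Qed.

Lemma interp01 (R : realFieldType) (lo hi x : R) : lo < hi -> lo <= x <= hi ->
  0 <= (x - lo) / (hi - lo) <= 1.
Proof.
move=> lohi /andP[lox xhi]; have gap_gt0 : 0 < hi - lo by rewrite subr_gt0.
by rewrite divr_ge0 ?subr_ge0 ?(ltW lohi) //= ler_pdivrMr // mul1r lerD2r.
Qed.

Section ConvexHull.
Variables (R : realType) (d : nat).
Implicit Types (C A : ('I_d -> R) * R -> Prop).

Definition fmsum (T : Type) (s : seq T) (w : T -> R) (z : T -> ('I_d -> R) * R) :=
  (fun i => \sum_(x <- s) w x * (z x).1 i, \sum_(x <- s) w x * (z x).2).

Lemma fmsum_cons (T : Type) x (s : seq T) w z : fmsum (x :: s) w z =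
  (fun i => w x * (z x).1 i + (fmsum s w z).1 i, w x * (z x).2 + (fmsum s w z).2).
Proof.
by rewrite /fmsum; congr pair; [apply: functional_extensionality => i|]; rewrite big_cons.
Qed.

Lemma fmsum_eq0 (T : eqType) (s : seq T) w z : (forall x, x \in s -> w x = 0) ->
  fmsum s w z = (fun=> 0, 0).
Proof.
move=> w0; rewrite /fmsum; congr pair; [apply: functional_extensionality => i|];
  by rewrite big_seq big1 // => x /w0 ->; rewrite mul0r.
Qed.

Lemma convex_fmsum C (T : eqType) (s : seq T) w z : convex_wrt (@fmcomb R d) C ->
  (forall x, x \in s -> 0 <= w x) -> \sum_(x <- s) w x = 1 ->
  (forall x, x \in s -> w x != 0 -> C (z x)) -> C (fmsum s w z).
Proof.
move=> Cc; elim: s w => [|x s IH] w w_ge0.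
  by rewrite big_nil => /eqP; rewrite eq_sym oner_eq0.
rewrite big_cons => w_sum Cz.
have ws_ge0 y : y \in s -> 0 <= w y by move=> ys; apply: w_ge0; rewrite in_cons ys orbT.
have Cz_s y : y \in s -> w y != 0 -> C (z y) by move=> ys; apply: Cz; rewrite in_cons ys orbT.
set r := \sum_(y <- s) w y in w_sum.
have r_ge0 : 0 <= r by rewrite /r big_seq sumr_ge0.
have [wx0|wx_neq0] := eqVneq (w x) 0.
  have -> : fmsum (x :: s) w z = fmsum s w z.
    rewrite fmsum_cons wx0.
    by congr pair; [apply: functional_extensionality => i|]; rewrite mul0r add0r.
  by apply: IH => //; rewrite -w_sum wx0 add0r.
have [r0|r_neq0] := eqVneq r 0.
  have ws0 y : y \in s -> w y = 0.
    move=> ys; move/eqP: r0; rewrite /r big_seq psumr_eq0 // => /allP/(_ y ys).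
    by rewrite ys => /eqP.
  have wx1 : w x = 1 by rewrite -w_sum r0 addr0.
  have -> : fmsum (x :: s) w z = z x.
    rewrite fmsum_cons fmsum_eq0 // wx1 [RHS]surjective_pairing.
    by congr pair; [apply: functional_extensionality => i|]; rewrite /= mul1r addr0.
  by apply: Cz; rewrite ?mem_head.
have rE : r = 1 - w x by rewrite -w_sum addrC addKr.
have -> : fmsum (x :: s) w z = fmcomb (w x) (z x) (fmsum s (fun y => w y / r) z).
  rewrite fmsum_cons /fmcomb /vcomb /fmsum -rE /=; congr pair.
    apply: functional_extensionality => i.
    by rewrite mulr_sumr; congr (_ + _); apply: eq_bigr => y _; field.
  by rewrite mulr_sumr; congr (_ + _); apply: eq_bigr => y _; field.
apply: Cc; [exact: Cz (mem_head _ _) wx_neq0| |].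
  apply: IH => [y ys||y ys]; first by rewrite divr_ge0 ?ws_ge0.
  - by rewrite -mulr_suml divff.
  - by rewrite mulf_eq0 invr_eq0 negb_or r_neq0 andbT; exact: Cz_s.
by rewrite w_ge0 ?mem_head //= -w_sum lerDl.
Qed.

Lemma hull_fmsum (T : finType) A w z : distribution w -> (forall x, w x != 0 -> A (z x)) ->
  hull_wrt (@fmcomb R d) A (fmsum (index_enum T) w z).
Proof. by move=> [w_ge0 w_sum] Az C Cc AC; apply: convex_fmsum => // x _ /Az/AC. Qed.

End ConvexHull.

(** * Points of (HQ) *)

Section Formulation.
Variables (R : realType) (d n : nat) (l : 'I_d -> nat).
Variables (a : 'I_d -> nat -> R) (tau : 'I_d -> nat -> nat).
Variables (II : {set {set 'I_d}}) (c : {set 'I_d} -> R).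

Hypothesis n_gt0 : (0 < n)%N.
Hypothesis a_incr : forall (i : 'I_d) (j : nat), (j < n)%N -> a i j < a i j.+1.
Hypothesis tau0 : forall i : 'I_d, tau i 0%N = 0%N.
Hypothesis tau_incr : forall (i : 'I_d) (t : nat), (t < l i)%N -> (tau i t < tau i t.+1)%N.
Hypothesis tau_l : forall i : 'I_d, tau i (l i) = n.

Local Notation vertex := {ffun 'I_d -> 'I_n.+1}.
Local Notation pt := (@point R d n l).
Local Notation formulation := (formulation a tau II c).
Implicit Types (p : pt) (q : vertex) (w : vertex -> R) (dl : forall i : 'I_d, 'I_(l i).-1 -> R).

Lemma le_a i j k : (j <= k)%N -> (k <= n)%N -> a i j <= a i k.
Proof.
move=> jk; elim: k jk => [|k IH]; first by rewrite leqn0 => /eqP ->.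
rewrite leq_eqVlt => /orP[/eqP -> //|]; rewrite ltnS => jk kn.
exact: le_trans (IH jk (ltnW kn)) (ltW (a_incr i kn)).
Qed.

Lemma tau_lt i t t' : (t < t')%N -> (t' <= l i)%N -> (tau i t < tau i t')%N.
Proof.
elim: t' => [//|t' IH]; rewrite ltnS leq_eqVlt => /orP[/eqP -> /tau_incr //|tt' lt'].
exact: ltn_trans (IH tt' (ltnW lt')) (tau_incr lt').
Qed.

Lemma tau_le i t t' : (t <= t')%N -> (t' <= l i)%N -> (tau i t <= tau i t')%N.
Proof. by rewrite leq_eqVlt => /orP[/eqP -> //|tt' lt']; exact/ltnW/tau_lt. Qed.

Lemma tau_le_n i t : (t <= l i)%N -> (tau i t <= n)%N.
Proof. by move=> tl; rewrite -(tau_l i) tau_le. Qed.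

Lemma tau_succ_lt_n i (t : 'I_(l i).-1) : (tau i t.+1 < n)%N.
Proof. by rewrite -(tau_l i) tau_lt //; case: t => /= t; case: (l i). Qed.

Lemma l_gt0 i : (0 < l i)%N.
Proof. by rewrite lt0n; apply: contraTneq n_gt0 => li0; rewrite -(tau_l i) li0 tau0. Qed.

Definition hq_point w dl : pt :=
  @Point R d n l (\sum_(I in II) c I * \sum_(q : vertex) (\prod_(i in I) a i (q i)) * w q) w
    (fun i k => \sum_(j < n.+1) a i (minn k j) * \sum_(q : vertex | q i == j) w q) dl.

Lemma HQ_hq_point p : HQ a II c p -> distribution (pw p) /\ p = hq_point (pw p) (pdelta p).
Proof.
case: p => mu w s dl [/= -> w_ge0 w_sum s_eq]; split=> //; congr Point.
by apply: functional_extensionality => i; apply: functional_extensionality => k; rewrite s_eq.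
Qed.

Lemma hq_point_HQ w dl : distribution w -> HQ a II c (hq_point w dl).
Proof. by case. Qed.

Lemma ps_hq_point w dl i k : ps (hq_point w dl) i k = \sum_(q : vertex) a i (minn k (q i)) * w q.
Proof. exact: sum_fibers. Qed.

Definition tail_mass w i k := \sum_(q : vertex) (k <= q i)%N%:R * w q.

Lemma Zs_hq_point w dl i k : distribution w -> (k <= n)%N ->
  Zs a (hq_point w dl) i k = tail_mass w i k.
Proof.
move=> [_ w_sum] kn; rewrite /Zs /tail_mass; case: eqP => [->|/eqP k_neq0].
  by rewrite -[LHS]w_sum; apply: eq_bigr => q _; rewrite mul1r.
rewrite -lt0n in k_neq0; have kE := prednK k_neq0.
rewrite /sat !ps_hq_point !inordK ?(leq_ltn_trans (leq_pred k)) // -sumrB mulr_suml.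
apply: eq_bigr => q _; rewrite -mulrBl mulrAC; congr (_ * _).
case: (leqP k (q i)) => kq.
  have a_step : a i k.-1 < a i k by move: (a_incr i (j := k.-1)); rewrite kE; apply.
  by rewrite (minn_idPl (leq_trans (leq_pred k) kq)) divff // subr_eq0 gt_eqF.
by rewrite (minn_idPr _) ?subrr ?mul0r // -ltnS kE.
Qed.

Lemma tail_mass_ge0 w i k : (forall q, 0 <= w q) -> 0 <= tail_mass w i k.
Proof. by move=> w_ge0; apply: sumr_ge0 => q _; rewrite mulr_ge0. Qed.

Lemma tail_mass_le1 w i k : distribution w -> tail_mass w i k <= 1.
Proof.
case=> w_ge0 <-; apply: ler_sum => q _.
by case: (k <= q i)%N; rewrite ?mul1r ?mul0r.
Qed.

Lemma le_tail_mass w i k k' : (forall q, 0 <= w q) -> (k <= k')%N ->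
  tail_mass w i k' <= tail_mass w i k.
Proof.
move=> w_ge0 kk'; apply: ler_sum => q _; rewrite ler_wpM2r // ler_nat.
by case: (leqP k' (q i)) => // /(leq_trans kk') ->.
Qed.

Lemma tail_mass_comb t w1 w2 i k :
  tail_mass (fun q => t * w1 q + (1 - t) * w2 q) i k =
  t * tail_mass w1 i k + (1 - t) * tail_mass w2 i k.
Proof. by rewrite /tail_mass !mulr_sumr -big_split; apply: eq_bigr => q _ /=; ring. Qed.

Lemma tail_mass_indicator q0 i k : tail_mass (fun q => (q == q0)%:R) i k = (k <= q0 i)%N%:R.
Proof. exact: sum_mul_eq_indicator. Qed.

Lemma tail_mass_sub w i k :
  tail_mass w i k - tail_mass w i k.+1 = \sum_(q : vertex) (q i == k :> nat)%:R * w q.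
Proof.
rewrite /tail_mass -sumrB; apply: eq_bigr => q _; rewrite -mulrBl.
by case: (ltngtP (q i) k) => _; rewrite ?subrr ?subr0.
Qed.

Definition sandwich w dl := forall i (t : 'I_(l i).-1),
  tail_mass w i (tau i t.+1).+1 <= dl i t <= tail_mass w i (tau i t.+1).

Definition delta_domain (b : bool) dl := forall i (t : 'I_(l i).-1),
  if b then dl i t = 0 \/ dl i t = 1 else 0 <= dl i t <= 1.

Lemma formulation_hq_pointE b w dl : distribution w ->
  formulation b (hq_point w dl) <-> sandwich w dl /\ delta_domain b dl.
Proof.
move=> w_distr; have [w_ge0 _] := w_distr.
have ZsE i k : (k <= n)%N -> Zs a (hq_point w dl) i k = tail_mass w i k.
  exact: Zs_hq_point.
split=> [[_ [_ _ Zs_delta delta_dom]]|[w_sandwich delta_dom]].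
  split=> // i t; have tn := tau_succ_lt_n t.
  by have [] := Zs_delta i t; rewrite !ZsE ?(ltnW tn) // => -> ->.
split; first exact: hq_point_HQ; split=> //.
- move=> i j /andP[j_gt0 jn]; rewrite !ZsE ?(leq_trans (leq_pred j)) //.
  exact: le_tail_mass (leq_pred j).
- by move=> i; rewrite ZsE // tail_mass_ge0.
- move=> i t; have tn := tau_succ_lt_n t.
  by rewrite !ZsE ?(ltnW tn) //; have /andP[] := w_sandwich i t.
Qed.

Lemma sandwich_delta_domain w dl : distribution w -> sandwich w dl -> delta_domain false dl.
Proof.
move=> w_distr w_sandwich i t; have [w_ge0 _] := w_distr; have /andP[lo hi] := w_sandwich i t.
by rewrite (le_trans (tail_mass_ge0 _ _ _) lo) // (le_trans hi (tail_mass_le1 _ _ _)).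
Qed.

Lemma relaxed_hq_pointE w dl : distribution w ->
  formulation false (hq_point w dl) <-> sandwich w dl.
Proof.
move=> w_distr; rewrite formulation_hq_pointE //; split=> [[] //|w_sandwich].
by split=> //; exact: sandwich_delta_domain w_distr w_sandwich.
Qed.

Lemma formulation_hq_point b p : formulation b p ->
  [/\ distribution (pw p), p = hq_point (pw p) (pdelta p),
       sandwich (pw p) (pdelta p) & delta_domain b (pdelta p)].
Proof.
case=> HQp Inc1p; have [w_distr E] := HQ_hq_point HQp.
have [] : sandwich (pw p) (pdelta p) /\ delta_domain b (pdelta p).
  by apply/formulation_hq_pointE => //; rewrite -E.
by [].
Qed.

Lemma pcomb_hq_point t w1 dl1 w2 dl2 : pcomb t (hq_point w1 dl1) (hq_point w2 dl2) =
  hq_point (fun q => t * w1 q + (1 - t) * w2 q) (fun i k => t * dl1 i k + (1 - t) * dl2 i k).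
Proof.
rewrite /pcomb /hq_point /=; congr Point.
  rewrite !mulr_sumr -big_split; apply: eq_bigr => I _ /=.
  by rewrite !mulr_sumr -big_split; apply: eq_bigr => q _ /=; ring.
apply: functional_extensionality => i; apply: functional_extensionality => k.
rewrite !mulr_sumr -big_split; apply: eq_bigr => j _ /=.
by rewrite !mulr_sumr -big_split; apply: eq_bigr => q _ /=; ring.
Qed.

Lemma formulation_pcomb b (p1 p2 : pt) t : 0 <= t <= 1 ->
  formulation b p1 -> formulation b p2 ->
  (b -> forall i (k : 'I_(l i).-1), pdelta p1 k = pdelta p2 k) ->
  formulation b (pcomb t p1 p2).
Proof.
move=> t01 F1 F2 same_delta.
have [w1_distr E1 sw1 dom1] := formulation_hq_point F1.
have [w2_distr E2 sw2 dom2] := formulation_hq_point F2.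
have /andP[t0 t1] := t01; have t1' : 0 <= 1 - t by rewrite subr_ge0.
rewrite E1 E2 pcomb_hq_point formulation_hq_pointE; last exact: distribution_comb.
split=> i k.
  rewrite !tail_mass_comb; have /andP[lo1 hi1] := sw1 i k; have /andP[lo2 hi2] := sw2 i k.
  by rewrite !lerD ?ler_wpM2l.
case: b same_delta dom1 dom2 {F1 F2} => [same_delta _ dom2|_ dom1 dom2].
  by rewrite same_delta // -mulrDl subrKC mul1r; case: (dom2 i k) => ->; [left|right].
have /andP[d1_ge0 d1_le1] := dom1 i k; have /andP[d2_ge0 d2_le1] := dom2 i k.
by rewrite addr_ge0 ?mulr_ge0 //= -[X in _ <= X](subrKC t) lerD ?ler_piMr.
Qed.

(** * Grid-cell points *)

Section CellPoint.
Variables (f : 'I_d -> R) (j : 'I_d -> nat).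
Hypothesis j_lt_n : forall i, (j i < n)%N.
Hypothesis f_in_cell : forall i, a i (j i) <= f i <= a i (j i).+1.

(** [cell_weight] is the product of the two-point distributions on [{j i, j i + 1}]
    whose means are the [f i]. *)
Definition cell_coef i := (f i - a i (j i)) / (a i (j i).+1 - a i (j i)).
Definition cell_marginal i (m : nat) : R :=
  (1 - cell_coef i) * (m == j i)%:R + cell_coef i * (m == (j i).+1)%:R.
Definition cell_weight q := \prod_i cell_marginal i (q i).
Definition cell_delta i (t : 'I_(l i).-1) : R := (tau i t.+1 <= j i)%N%:R.
Definition cell_point : pt := hq_point cell_weight cell_delta.

Lemma cell_coef01 i : 0 <= cell_coef i <= 1.
Proof. exact: interp01 (a_incr _ (j_lt_n i)) (f_in_cell i). Qed.

Lemma cell_coef_interp i : (1 - cell_coef i) * a i (j i) + cell_coef i * a i (j i).+1 = f i.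
Proof.
have gap_neq0 : a i (j i).+1 - a i (j i) != 0 by rewrite subr_eq0 gt_eqF ?a_incr.
by rewrite /cell_coef; field.
Qed.

Lemma sum_cell_marginal i (g : nat -> R) : \sum_(m < n.+1) g m * cell_marginal i m =
  (1 - cell_coef i) * g (j i) + cell_coef i * g (j i).+1.
Proof.
rewrite /cell_marginal; under eq_bigr do rewrite mulrDr mulrCA [g _ * (_ * _)]mulrCA.
have jn := j_lt_n i.
by rewrite big_split /= -!mulr_sumr !sum_ord_mul_eq_indicator // ltnS ltnW.
Qed.

Lemma sum_prod_cell_weight (I : {set 'I_d}) (G : 'I_d -> nat -> R) :
  \sum_(q : vertex) (\prod_(i in I) G i (q i)) * cell_weight q =
  \prod_(i in I) ((1 - cell_coef i) * G i (j i) + cell_coef i * G i (j i).+1).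
Proof.
pose H i m := if i \in I then G i m else 1.
transitivity (\prod_i \sum_(m < n.+1) H i m * cell_marginal i m).
  by rewrite bigA_distr_bigA; apply: eq_bigr => q _; rewrite big_mkcond -big_split.
rewrite [RHS]big_mkcond; apply: eq_bigr => i _; rewrite /H; case: ifP => _.
  exact: sum_cell_marginal.
by rewrite (sum_cell_marginal i (fun=> 1)) !mulr1 subrK.
Qed.

Lemma sum_coord_cell_weight i0 (G : nat -> R) : \sum_(q : vertex) G (q i0) * cell_weight q =
  (1 - cell_coef i0) * G (j i0) + cell_coef i0 * G (j i0).+1.
Proof.
have := sum_prod_cell_weight [set i0] (fun=> G); rewrite big_set1 => <-.
by apply: eq_bigr => q _; rewrite big_set1.
Qed.

Lemma cell_weight_distribution : distribution cell_weight.
Proof.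
split=> [q|].
  apply: prodr_ge0 => i _; have /andP[lam0 lam1] := cell_coef01 i.
  by apply: addr_ge0; apply: mulr_ge0; rewrite ?ler0n ?subr_ge0.
have := sum_prod_cell_weight set0 (fun _ _ => 1); rewrite !big_set0 => <-.
by apply: eq_bigr => q _; rewrite mul1r.
Qed.

Lemma ps_cell_point i (k : 'I_n.+1) : ps cell_point i k = if (k <= j i)%N then a i k else f i.
Proof.
rewrite ps_hq_point (sum_coord_cell_weight i (fun m => a i (minn k m))).
case: leqP => kj; last by rewrite (minn_idPr kj) cell_coef_interp.
by rewrite (minn_idPl (leqW kj)) -mulrDl subrK mul1r.
Qed.

Lemma slast_cell_point : slast cell_point = f.
Proof.
by apply: functional_extensionality => i; rewrite /slast ps_cell_point leqNgt /= j_lt_n.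
Qed.

Lemma pmu_cell_point : pmu cell_point = phi II c f.
Proof.
rewrite /= /phi; apply: eq_bigr => I _; congr (_ * _).
by rewrite sum_prod_cell_weight; apply: eq_bigr => i _; rewrite cell_coef_interp.
Qed.

Lemma cell_point_formulation : formulation true cell_point.
Proof.
have [w_ge0 _] := cell_weight_distribution.
apply/formulation_hq_pointE; first exact: cell_weight_distribution.
have tailE i k : tail_mass cell_weight i k =
    (1 - cell_coef i) * (k <= j i)%N%:R + cell_coef i * (k <= (j i).+1)%N%:R.
  exact: (sum_coord_cell_weight i (fun m => (k <= m)%N%:R)).
apply: all_and2 => i; apply: all_and2 => t; rewrite /cell_delta.
case: leqP => tj.
  rewrite [tail_mass _ _ (tau i _)]tailE tj (leqW tj) -mulrDl subrK mulr1.
  split; last by right.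
  by rewrite lexx andbT; apply: tail_mass_le1; exact: cell_weight_distribution.
rewrite tailE ltnS (leqNgt (tau i t.+1)) tj ltnNge (ltnW tj) /= !mulr0 addr0.
by split; [rewrite lexx tail_mass_ge0|left].
Qed.

End CellPoint.

Lemma exists_cell i x lo hi : (lo < hi)%N -> (hi <= n)%N -> a i lo <= x <= a i hi ->
  exists2 k, (lo <= k < hi)%N & a i k <= x <= a i k.+1.
Proof.
elim: hi => [//|hi IH]; rewrite ltnS => lohi hin /andP[lo_x x_hi].
have [hi_x|x_le_hi] := ltP (a i hi) x.
  by exists hi; rewrite ?lohi ?ltnSn ?(ltW hi_x).
move: lohi; rewrite leq_eqVlt => /orP[/eqP lo_hi|lohi].
  by exists lo; rewrite ?leqnn ?lo_x //= lo_hi.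
have [k /andP[lok khi] k_cell] := IH lohi (ltnW hin) (introT andP (conj lo_x x_le_hi)).
by exists k; rewrite // lok ltnW.
Qed.

(** * Projection onto (f, mu) *)

Lemma support_ge_of_tail_mass1 w i k q : distribution w -> 1 <= tail_mass w i k ->
  w q != 0 -> (k <= q i)%N.
Proof.
move=> [w_ge0 w_sum] tail1; apply: contraNT => /negbTE kq.
have term_ge0 q' : xpredT q' -> 0 <= (1 - (k <= q' i)%N%:R) * w q'.
  by move=> _; rewrite mulr_ge0 //; case: (k <= q' i)%N; rewrite ?subrr ?subr0.
have sum0 : \sum_(q' : vertex) (1 - (k <= q' i)%N%:R) * w q' = 0.
  apply/eqP; rewrite eq_le sumr_ge0 ?andbT //.
  by under eq_bigr do rewrite mulrBl mul1r; rewrite sumrB w_sum subr_le0.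
by have := (psumr_eq0P term_ge0 sum0 (i:=q) isT); rewrite kq subr0 mul1r => ->.
Qed.

Lemma support_lt_of_tail_mass0 w i k q : (forall q, 0 <= w q) -> tail_mass w i k <= 0 ->
  w q != 0 -> (q i < k)%N.
Proof.
move=> w_ge0 tail0; rewrite ltnNge; apply: contraNN => kq.
have term_ge0 q' : xpredT q' -> 0 <= (k <= q' i)%N%:R * w q' by rewrite mulr_ge0.
have sum0 : tail_mass w i k = 0 by apply/eqP; rewrite eq_le tail0 tail_mass_ge0.
by have := (psumr_eq0P term_ge0 sum0 (i:=q) isT); rewrite kq mul1r => ->.
Qed.

(** With binary [delta], the first [t] with [t = l i] or [delta_(i,t) = 0] selects a box
    containing the [i]-th coordinate of every vertex in the support. *)
Lemma binary_box_coord w dl i : distribution w -> sandwich w dl -> delta_domain true dl ->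
  exists t, (0 < t <= l i)%N /\ forall q, w q != 0 -> (tau i t.-1 <= q i <= tau i t)%N.
Proof.
move=> w_distr w_sandwich delta01; have [w_ge0 _] := w_distr.
pose P t := (0 < t <= l i)%N &&
  ((t == l i) || [exists t' : 'I_(l i).-1, (t'.+1 == t) && (dl i t' == 0)]).
have exP : exists t, P t by exists (l i); rewrite /P l_gt0 leqnn eqxx.
case: (ex_minnP exP) => t /andP[t_range Pt] t_min; exists t; split=> // q wq.
have /andP[t_gt0 tl] := t_range; clear t_range.
apply/andP; split.
  case: t t_gt0 tl {Pt} t_min => [//|[_ _ _|s _ tl t_min]]; first by rewrite tau0.
  have s_lt : (s < (l i).-1)%N by rewrite -ltnS prednK ?l_gt0.
  have delta1 : dl i (Ordinal s_lt) = 1.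
    case: (delta01 i (Ordinal s_lt)) => // delta0.
    suff /t_min : P s.+1 by rewrite ltnn.
    rewrite /P (ltnW tl) /=; apply/orP; right; apply/existsP; exists (Ordinal s_lt).
    by rewrite /= eqxx delta0 eqxx.
  have /andP[_] := w_sandwich i (Ordinal s_lt); rewrite delta1 => tail1.
  exact: support_ge_of_tail_mass1 tail1 wq.
case/orP: Pt => [/eqP -> | /existsP[t' /andP[/eqP <- /eqP delta0]]]; first by rewrite tau_l -ltnS.
have /andP[tail0 _] := w_sandwich i t'; rewrite delta0 in tail0.
by rewrite -ltnS; exact: support_lt_of_tail_mass0 tail0 wq.
Qed.

Definition vertex_graph q : ('I_d -> R) * R :=
  (fun i => a i (q i), phi II c (fun i => a i (q i))).

Lemma proj_hq_point w dl :
  (slast (hq_point w dl), pmu (hq_point w dl)) = fmsum (index_enum vertex) w vertex_graph.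
Proof.
rewrite /fmsum; congr pair.
  apply: functional_extensionality => i; rewrite /slast ps_hq_point.
  by apply: eq_bigr => q _; rewrite mulrC (minn_idPr _) // -ltnS.
rewrite /= /phi; under eq_bigr do rewrite mulr_sumr.
rewrite exchange_big /=; apply: eq_bigr => q _.
by rewrite mulr_sumr; apply: eq_bigr => I _; ring.
Qed.

Lemma formulation_target p : formulation true p -> target l a tau II c (slast p, pmu p).
Proof.
move=> /formulation_hq_point[w_distr -> w_sandwich delta01].
have [tt tt_box] := fin_all_exists (fun i => binary_box_coord i w_distr w_sandwich delta01).
exists tt; split=> [i|]; first by case: (tt_box i).
rewrite proj_hq_point; apply: hull_fmsum => // q wq; split=> // i /=.
have [/andP[_ tl] /(_ q wq)/andP[lo hi]] := tt_box i.
by rewrite !le_a // ?(tau_le_n tl) // -ltnS.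
Qed.

Lemma cell_delta_box j tt i (t : 'I_(l i).-1) : (0 < tt <= l i)%N ->
  (tau i tt.-1 <= j i < tau i tt)%N -> cell_delta j t = (t.+1 < tt)%N%:R.
Proof.
move=> /andP[t_gt0 tl] /andP[lo hi]; rewrite /cell_delta; congr (nat_of_bool _)%:R.
case: (ltnP t.+1 tt) => t_tt.
  have t_le : (t.+1 <= tt.-1)%N by rewrite -ltnS prednK.
  by apply: leq_trans lo; apply: tau_le t_le (leq_trans (leq_pred _) tl).
apply/negbTE; rewrite -ltnNge; apply: leq_trans hi _; apply: tau_le => //.
exact: leq_trans (ltn_ord t) (leq_pred _).
Qed.

Lemma target_formulation y : target l a tau II c y ->
  exists p, formulation true p /\ (slast p, pmu p) = y.
Proof.
case=> tt [tt_range y_hull].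
pose C y := exists p, [/\ formulation true p,
  forall i (t : 'I_(l i).-1), pdelta p t = (t.+1 < tt i)%N%:R & (slast p, pmu p) = y].
suff [p [Fp _ <-]] : C y by exists p.
apply: y_hull => [y1 y2 t [p1 [F1 D1 <-]] [p2 [F2 D2 <-]] t01 | z [z_graph z_box]].
  exists (pcomb t p1 p2); split=> //.
    by apply: formulation_pcomb => // _ i k; rewrite D1 D2.
  by move=> i k /=; rewrite D1 D2 -mulrDl subrKC mul1r.
have cell_ex i : exists k,
    (tau i (tt i).-1 <= k < tau i (tt i))%N /\ a i k <= z.1 i <= a i k.+1.
  have /andP[t_gt0 tl] := tt_range i.
  have lohi : (tau i (tt i).-1 < tau i (tt i))%N by rewrite tau_lt ?ltn_predL.
  by have [k k_range k_cell] := exists_cell lohi (tau_le_n tl) (z_box i); exists k.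
have [j j_cell] := fin_all_exists cell_ex.
have j_lt_n i : (j i < n)%N.
  have [/andP[_ hi] _] := j_cell i; apply: leq_trans hi (tau_le_n _).
  by have /andP[] := tt_range i.
have j_in_cell i : a i (j i) <= z.1 i <= a i (j i).+1 by case: (j_cell i).
exists (cell_point z.1 j); split.
- exact: cell_point_formulation.
- by move=> i t; apply: cell_delta_box => //; case: (j_cell i).
- by rewrite slast_cell_point // pmu_cell_point // -z_graph -surjective_pairing.
Qed.

(** * Extreme points of the relaxation *)

Definition set_delta dl i0 (t0 : 'I_(l i0).-1) (y : R) i (t : 'I_(l i).-1) : R :=
  if (i == i0) && (val t == val t0) then y else dl i t.

Lemma sandwich_set_delta w dl i0 (t0 : 'I_(l i0).-1) y : sandwich w dl ->
  tail_mass w i0 (tau i0 t0.+1).+1 <= y <= tail_mass w i0 (tau i0 t0.+1) ->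
  sandwich w (set_delta dl t0 y).
Proof.
move=> w_sandwich y_sandwich i t; rewrite /set_delta.
case: ifP => [/andP[/eqP Ei /eqP Et]|_]; last exact: w_sandwich.
by subst i; rewrite (val_inj Et).
Qed.

Lemma hq_point_set_delta w dl i0 (t0 : 'I_(l i0).-1) : hq_point w dl =
  pcomb (dl i0 t0) (hq_point w (set_delta dl t0 1)) (hq_point w (set_delta dl t0 0)).
Proof.
rewrite pcomb_hq_point; congr hq_point.
  by apply: functional_extensionality => q; rewrite -mulrDl subrKC mul1r.
apply: functional_extensionality_dep => i; apply: functional_extensionality => t.
rewrite /set_delta; case: ifP => [/andP[/eqP Ei /eqP Et]|_]; last by rewrite -mulrDl subrKC mul1r.
by subst i; rewrite (val_inj Et) mulr1 mulr0 addr0.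
Qed.

(** Where the sandwich is all of [[0, 1]], [delta] is a free coordinate. *)
Lemma extreme_free_delta p i0 (t0 : 'I_(l i0).-1) :
  extreme_wrt (@pcomb R d n l) (formulation false) p ->
  1 <= tail_mass (pw p) i0 (tau i0 t0.+1) -> tail_mass (pw p) i0 (tau i0 t0.+1).+1 <= 0 ->
  pdelta p t0 = 0 \/ pdelta p t0 = 1.
Proof.
move=> p_ext tail1 tail0; have [w_distr E w_sandwich _] := formulation_hq_point p_ext.1.
have [x0|x_neq0] := eqVneq (pdelta p t0) 0; first by left.
have [x1|x_neq1] := eqVneq (pdelta p t0) 1; first by right.
have F y : 0 <= y <= 1 -> formulation false (hq_point (pw p) (set_delta (pdelta p) t0 y)).
  move=> /andP[y_ge0 y_le1]; apply/relaxed_hq_pointE/sandwich_set_delta => //.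
  by rewrite (le_trans tail0) // (le_trans _ tail1).
have /andP[x_ge0 x_le1] := sandwich_delta_domain w_distr w_sandwich t0.
have x01 : 0 < pdelta p t0 < 1 by rewrite !lt_def x_neq0 x_ge0 eq_sym x_neq1 x_le1.
have := p_ext.2 _ _ _ (F 1 (introT andP (conj ler01 (lexx 1))))
  (F 0 (introT andP (conj (lexx 0) ler01))) x01 (etrans E (hq_point_set_delta _ _ t0)).
move/(congr1 (fun p : pt => pdelta p t0)); rewrite /= /set_delta !eqxx /=.
by move/eqP; rewrite oner_eq0.
Qed.

Lemma vertex_mass_le_gap w q0 i : (forall q, 0 <= w q) ->
  w q0 <= tail_mass w i (q0 i) - tail_mass w i (q0 i).+1.
Proof.
move=> w_ge0; rewrite tail_mass_sub (bigD1 q0) //= eqxx mul1r lerDl.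
by apply: sumr_ge0 => q _; rewrite mulr_ge0.
Qed.

Section VertexSplit.
Variables (w : vertex -> R) (dl : forall i : 'I_d, 'I_(l i).-1 -> R) (q0 : vertex).
Hypotheses (w_distr : distribution w) (w_sandwich : sandwich w dl).
Hypotheses (wq0_gt0 : 0 < w q0) (wq0_lt1 : w q0 < 1).

Local Notation ws := (w q0).
Local Notation vertex_weight := (fun q : vertex => (q == q0)%:R).

(** Where [q0 i] is exactly the breakpoint, the vertex part gets the relative position of
    [delta] inside its sandwich. *)
Definition vertex_delta i (t : 'I_(l i).-1) : R :=
  let k := tau i t.+1 in
  if (q0 i < k)%N then 0 else if (k < q0 i)%N then 1
  else (dl t - tail_mass w i k.+1) / (tail_mass w i k - tail_mass w i k.+1).

Definition residual_weight q := (w q - ws * (q == q0)%:R) / (1 - ws).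

Definition residual_delta i (t : 'I_(l i).-1) := (dl t - ws * vertex_delta t) / (1 - ws).

Let ws_neq1 : 1 - ws != 0. Proof. by rewrite subr_eq0 eq_sym lt_eqF. Qed.

Lemma hq_point_vertex_split : hq_point w dl =
  pcomb ws (hq_point vertex_weight vertex_delta) (hq_point residual_weight residual_delta).
Proof.
rewrite pcomb_hq_point; congr hq_point.
  by apply: functional_extensionality => q; rewrite /residual_weight; field.
apply: functional_extensionality_dep => i; apply: functional_extensionality => t.
by rewrite /residual_delta; field.
Qed.

Lemma vertex_sandwich : sandwich vertex_weight vertex_delta.
Proof.
move=> i t; rewrite !tail_mass_indicator /vertex_delta /=.
case: (ltngtP (q0 i) (tau i t.+1)) => [lt|gt|eq]; rewrite ?lexx ?ler01 //.
have [w_ge0 _] := w_distr; have /andP[lo hi] := w_sandwich t.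
apply: interp01 (introT andP (conj lo hi)); rewrite -subr_gt0.
by apply: lt_le_trans wq0_gt0 _; rewrite -eq vertex_mass_le_gap.
Qed.

Lemma tail_mass_residual i k :
  tail_mass residual_weight i k = (tail_mass w i k - ws * (k <= q0 i)%N%:R) / (1 - ws).
Proof.
rewrite /tail_mass -[X in _ - _ * X](sum_mul_eq_indicator (fun q => (k <= q i)%N%:R) q0).
by rewrite mulr_sumr -sumrB mulr_suml; apply: eq_bigr => q _; rewrite /residual_weight; field.
Qed.

Lemma residual_distribution : distribution residual_weight.
Proof.
have [w_ge0 w_sum] := w_distr; split=> [q|].
  rewrite /residual_weight divr_ge0 ?subr_ge0 ?(ltW wq0_lt1) //.
  by case: eqP => [->|_] /=; rewrite ?mulr1 ?mulr0.
rewrite -mulr_suml sumrB -mulr_sumr w_sum (distribution_indicator R q0).2 mulr1.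
exact: divff.
Qed.

Lemma residual_sandwich : sandwich residual_weight residual_delta.
Proof.
have [w_ge0 _] := w_distr; have ws_lt : 0 < 1 - ws by rewrite subr_gt0.
move=> i t; rewrite !tail_mass_residual /residual_delta !ler_pM2r ?invr_gt0 //.
have /andP[lo hi] := w_sandwich t; rewrite /vertex_delta /=.
case: (ltngtP (q0 i) (tau i t.+1)) => [lt|gt|eq] /=; rewrite ?mulr0 ?mulr1 ?subr0 ?lerD2r ?lo //.
set T0 := tail_mass w i (tau i t.+1); set T1 := tail_mass w i (tau i t.+1).+1.
have gap : ws <= T0 - T1 by rewrite /T0 /T1 -eq vertex_mass_le_gap.
set y := (dl t - T1) / (T0 - T1).
have [y_ge0 y_le1] : 0 <= y /\ y <= 1.
  by apply/andP/interp01; rewrite ?lo // -subr_gt0 (lt_le_trans wq0_gt0).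
have yE : y * (T0 - T1) = dl t - T1 by rewrite mulfVK // gt_eqF // (lt_le_trans wq0_gt0).
apply/andP; split; nra.
Qed.

End VertexSplit.

Lemma extreme_weight_eq1 p q0 : extreme_wrt (@pcomb R d n l) (formulation false) p ->
  0 < pw p q0 -> pw p q0 = 1.
Proof.
move=> p_ext wq0_gt0; have [w_distr E w_sandwich _] := formulation_hq_point p_ext.1.
have wq0_le1 : pw p q0 <= 1.
  by case: w_distr => w_ge0 <-; rewrite (bigD1 q0) //= lerDl sumr_ge0.
have [wq0_lt1|] := ltP (pw p q0) 1; last by move=> ?; apply/eqP; rewrite eq_le wq0_le1.
have Fv := proj2 (relaxed_hq_pointE _ (distribution_indicator R q0))
  (vertex_sandwich w_distr w_sandwich wq0_gt0).
have Fr := proj2 (relaxed_hq_pointE _ (residual_distribution w_distr wq0_lt1))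
  (residual_sandwich w_distr w_sandwich wq0_gt0 wq0_lt1).
have wq0_01 : 0 < pw p q0 < 1 by rewrite wq0_gt0 wq0_lt1.
have := p_ext.2 _ _ _ Fv Fr wq0_01 (etrans E (hq_point_vertex_split _ wq0_lt1)).
move/(congr1 (fun p : pt => pw p q0)); rewrite /= /residual_weight eqxx mulr1 subrr mul0r.
by move/eqP; rewrite oner_eq0.
Qed.

Lemma extreme_vertex p : extreme_wrt (@pcomb R d n l) (formulation false) p ->
  exists q0, forall q, pw p q = (q == q0)%:R.
Proof.
move=> p_ext; have [[w_ge0 w_sum] _ _ _] := formulation_hq_point p_ext.1.
have [q0 wq0_gt0] := distribution_supported (conj w_ge0 w_sum).
have wq0 := extreme_weight_eq1 p_ext wq0_gt0.
exists q0 => q; have [-> //|q_neq] := eqVneq q q0.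
have rest0 : \sum_(q' | q' != q0) pw p q' = 0.
  by move/eqP: w_sum; rewrite (bigD1 q0) //= wq0 -subr_eq0 addrAC subrr add0r => /eqP.
exact: psumr_eq0P (fun q' _ => w_ge0 q') rest0 q q_neq.
Qed.

Lemma extreme_delta_binary p : extreme_wrt (@pcomb R d n l) (formulation false) p ->
  forall i (t : 'I_(l i).-1), pdelta p t = 0 \/ pdelta p t = 1.
Proof.
move=> p_ext i t; have [_ _ w_sandwich _] := formulation_hq_point p_ext.1.
have [q0 w_vertex] := extreme_vertex p_ext.
have tailE k : tail_mass (pw p) i k = (k <= q0 i)%N%:R.
  by rewrite -(tail_mass_indicator q0); apply: eq_bigr => q _; rewrite w_vertex.
have /andP[lo hi] := w_sandwich i t; rewrite !tailE in lo hi.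
case: (ltngtP (q0 i) (tau i t.+1)) => [lt|gt|eq].
- rewrite leqNgt lt in hi; rewrite leqNgt ltnS (ltnW lt) in lo.
  by left; apply/le_anti; rewrite hi lo.
- rewrite gt in lo; rewrite (ltnW gt) in hi.
  by right; apply/le_anti; rewrite hi lo.
- by apply: extreme_free_delta; rewrite // !tailE eq ?leqnn ?ltnn.
Qed.

(** * The MICP relaxation *)

Lemma graph_point (y : 'I_d -> R) (lb : 'I_d -> 'I_n.+1 -> R) :
  (forall i, a i 0%N <= y i <= a i n) ->
  (forall i, lb i ord0 = a i 0%N) -> (forall i, lb i ord_max = y i) ->
  (forall i (k : 'I_n.+1), (1 <= k <= n.-1)%N -> lb i k <= Num.min (y i) (a i k)) ->
  exists p, [/\ formulation true p, slast p = y, pmu p = phi II c y &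
                forall i k, lb i k <= ps p i k].
Proof.
move=> y_range lb0 lbn lb_mid.
have cell_ex i : exists k, (k < n)%N /\ a i k <= y i <= a i k.+1.
  by have [k /andP[_ kn] k_cell] := exists_cell n_gt0 (leqnn n) (y_range i); exists k.
have [j j_cell] := fin_all_exists cell_ex.
have j_lt_n i : (j i < n)%N by case: (j_cell i).
have y_cell i : a i (j i) <= y i <= a i (j i).+1 by case: (j_cell i).
exists (cell_point y j); split.
- exact: cell_point_formulation.
- exact: slast_cell_point.
- exact: pmu_cell_point.
move=> i k; rewrite ps_cell_point //.
have [k0|k_gt0] := posnP k; first by rewrite (_ : k = ord0) ?lb0 //; apply: val_inj.
have [kn|kn] := eqVneq (k : nat) n.
  have -> : k = ord_max by apply: val_inj.
  by rewrite lbn /= leqNgt j_lt_n.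
have k_mid : (1 <= k <= n.-1)%N by rewrite k_gt0 -ltnS prednK // ltn_neqAle kn -ltnS ltn_ord.
by have := lb_mid i k k_mid; rewrite le_min => /andP[lb_y lb_a]; case: ifP.
Qed.

Lemma ext_formulation_convex m (X : ('I_m -> R) -> Prop) u W :
  convex_wrt (@vcomb R m) X ->
  (forall (i : 'I_d) (j : 'I_n.+1) x y t, X x -> X y -> 0 <= t <= 1 ->
     u (vcomb t x y) i j <= t * u x i j + (1 - t) * u y i j) ->
  convex_wrt (fun t (v1 v2 : ('I_m -> R) * ('I_d -> R)) => (vcomb t v1.1 v2.1, vcomb t v1.2 v2.2))
    (fun v => W v.1 v.2) ->
  convex_wrt (@xpcomb R m d n l) (ext_formulation a tau II c X u W false).
Proof.
move=> X_convex u_convex W_convex [x1 p1] [x2 p2] t [/= X1 F1 U1 W1] [/= X2 F2 U2 W2] t01.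
have /andP[t0 t1] := t01.
split=> /=; first exact: X_convex.
- exact: formulation_pcomb.
- move=> i k; apply: le_trans (u_convex i k x1 x2 t X1 X2 t01) _.
  by rewrite lerD // ler_wpM2l ?subr_ge0.
- exact: (W_convex (x1, slast p1) (x2, slast p2) t W1 W2 t01).
Qed.

End Formulation.

Theorem corollary4p7 (R : realType) (d n m : nat)
  (a : 'I_d -> nat -> R) (l : 'I_d -> nat) (tau : 'I_d -> nat -> nat)
  (II : {set {set 'I_d}}) (c : {set 'I_d} -> R)
  (X : ('I_m -> R) -> Prop) (f : ('I_m -> R) -> 'I_d -> R)
  (u : ('I_m -> R) -> 'I_d -> 'I_n.+1 -> R)
  (W : ('I_m -> R) -> ('I_d -> R) -> Prop) :
  (1 <= d)%N -> (1 <= n)%N ->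
  (forall (i : 'I_d) (j : nat), (j < n)%N -> a i j < a i j.+1) ->
  (forall i : 'I_d, tau i 0%N = 0%N) ->
  (forall (i : 'I_d) (t : nat), (t < l i)%N -> (tau i t < tau i t.+1)%N) ->
  (forall i : 'I_d, tau i (l i) = n) ->
  (* hypotheses of the second part *)
  (forall x, X x -> forall i, a i 0%N <= f x i <= a i n) ->
  convex_wrt (@vcomb R m) X ->
  (forall (i : 'I_d) (j : 'I_n.+1) x y t, X x -> X y -> 0 <= t <= 1 ->
     u (vcomb t x y) i j <= t * u x i j + (1 - t) * u y i j) ->
  (forall x i, X x -> u x i ord0 = a i 0%N) ->
  (forall x i, X x -> u x i ord_max = f x i) ->
  (forall x (i : 'I_d) (j : 'I_n.+1), X x -> (1 <= j <= n.-1)%N ->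
     u x i j <= Num.min (f x i) (a i j)) ->
  convex_wrt (fun t (p q : ('I_m -> R) * ('I_d -> R)) => (vcomb t p.1 q.1, vcomb t p.2 q.2))
    (fun p => W p.1 p.2) ->
  (forall x, X x -> W x (f x)) ->
  ideal_formulation (formulation (n := n) (l := l) a tau II c) (target l a tau II c) /\
  MICP_relaxation (ext_formulation (n := n) (l := l) a tau II c X u W) X (fun x => phi II c (f x)).
Proof.
move=> _ n_gt0 a_incr tau0 tau_incr tau_l f_range X_convex u_convex u0 un u_mid W_convex W_graph.
split; first split.
- move=> y; split; first exact: target_formulation.
  by case=> p [Fp <-]; apply: formulation_target.
- exact: extreme_delta_binary.
split; last exact: ext_formulation_convex.
move=> x Xx.
have [p [Fp p_proj p_mu p_lb]] := graph_point II c n_gt0 a_incr tau_incr tau_l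
  (f_range x Xx) (u0 x^~ Xx) (un x^~ Xx) (fun i k => u_mid x i k Xx).
by exists p; split=> //; split=> //=; rewrite p_proj; apply: W_graph.
Qed.
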